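(* There exist constants $C,c>0$ such that for every $x\in\mathbb Z_{\ge0}$, all integers $0\le m<k\le n$ and every $u>0$, $$\mathbf P^n_x\Big(\sup_{m\le i\le k}|S_i-S_m|>u\Big)\le C\,e^{-cu^2/(k-m)}.$$ (In particular, with $m=0$, $\mathbf P^n_x(\sup_{0\le i\le k}|S_i-x|>u)\le Ce^{-cu^2/k}$; one can take $c=1/32$.)
   Context: $\mathbf P^n_x$ is the uniform probability measure on the finite set of paths $(s_0,\dots,s_n)\in\mathbb Z_{\ge0}^{n+1}$ with $s_0=x$ and $|s_{i+1}-s_i|=1$ for all $i$ (simple symmetric random walk conditioned to stay non-negative up to time $n$), and $S=(S_i)_{i=0}^n$ is its coordinate process. *)

From Stdlib Require Import Reals ZArith List.
Import ListNotations.
Open Scope R_scope.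

Fixpoint all_steps (n : nat) : list (list Z) :=
  match n with
  | O => [ [] ]
  | S n' => flat_map (fun s => [ (1%Z :: s); ((-1)%Z :: s) ]) (all_steps n')
  end.

Definition pos (x : Z) (s : list Z) (i : nat) : Z :=
  (x + fold_right Z.add 0%Z (firstn i s))%Z.

Definition nonneg_path (x : Z) (n : nat) (s : list Z) : bool :=
  forallb (fun i => Z.leb 0 (pos x s i)) (seq 0 (S n)).

(* The finite support of P^n_x: paths from x of length n staying >= 0,
   each listed exactly once (encoded by its step sequence). *)
Definition paths (x : Z) (n : nat) : list (list Z) :=
  filter (nonneg_path x n) (all_steps n).

Definition Pn (x : Z) (n : nat) (E : list Z -> bool) : R :=
  INR (length (filter E (paths x n))) / INR (length (paths x n)).

Definition osc_event (m k : nat) (x : Z) (u : R) (s : list Z) : bool :=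
  existsb (fun i => if Rlt_dec u (IZR (Z.abs (pos x s i - pos x s m)))
                    then true else false)
          (seq m (S (k - m))).

(* We work with unnormalised sums.  [Sum n F] sums F over all 2^n step
   sequences, and [Wsum y n F] sums F over the step sequences whose path
   from y stays non-negative up to time n, so that
   P^n_x(E) = Wsum x n (ind E) / Wsum x n 1.  The proof rests on three
   facts about [Wsum]:
   - the Markov property: [Wsum] factorises at any deterministic time, and
     hence at the first time a prefix-determined event happens;
   - downward deviations: conditioning on the increasing event "stay
     non-negative" can only make a decreasing event less likely (Harris'
     inequality), so Hoeffding's bound exp(-b^2/(8L)) for a drop of b in
     L steps of the free walk survives the conditioning;
   - upward deviations: the number of non-negative paths of length M from z,
     [npaths M z], is concave in z, so [npaths M z / (z+1)] decreases; with
     the harmonic function z+1 of the killed walk and the reflection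
     principle this bounds upward deviations by 10 exp(-b^2/(32L)).
   Finally, if sup_{m<=i<=k} |S_i - S_m| > u then either S_k - S_m deviates
   by u/2, or after the first exit time t from [-u,u] the increment
   S_k - S_t deviates by u/2 in the opposite direction.  The four resulting
   terms give P <= 22 exp(-u^2/(128(k-m))). *)

From Pilot Require Import Defs.
From Stdlib Require Import Reals ZArith List Lia Lra.
Import ListNotations.
(* [pos] from Defs, not the projection of [posreal]. *)
Import Defs.
Open Scope R_scope.
Local Open Scope bool_scope.

Definition ind (b : bool) : R := if b then 1 else 0.
Definition ind_le (a b : R) : R := if Rle_dec a b then 1 else 0.

Lemma ind_and a b : ind (a && b) = ind a * ind b.
Proof. destruct a, b; unfold ind; simpl; lra. Qed.

Definition sum_list (l : list (list Z)) (F : list Z -> R) : R :=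
  fold_right (fun s acc => F s + acc) 0 l.

Lemma sum_list_app l1 l2 F : sum_list (l1 ++ l2) F = sum_list l1 F + sum_list l2 F.
Proof. induction l1; simpl; [lra | rewrite IHl1; lra]. Qed.

Lemma sum_list_flat_map (g : list Z -> list (list Z)) l F :
  sum_list (flat_map g l) F = sum_list l (fun s => sum_list (g s) F).
Proof. induction l; simpl; [lra |]. rewrite sum_list_app, IHl. lra. Qed.

Lemma sum_list_filter (P : list Z -> bool) l F :
  sum_list (filter P l) F = sum_list l (fun s => ind (P s) * F s).
Proof. induction l; simpl; auto. destruct (P a); simpl; rewrite IHl; unfold ind; lra. Qed.

Lemma length_filter_sum_list (P : list Z -> bool) l :
  INR (length (filter P l)) = sum_list l (fun s => ind (P s)).
Proof.
  induction l; simpl; auto.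
  destruct (P a); simpl length; rewrite ?S_INR, IHl; unfold ind; lra.
Qed.

Lemma sum_list_ext l F G : (forall s, In s l -> F s = G s) -> sum_list l F = sum_list l G.
Proof.
  induction l; simpl; intros H; [lra |].
  rewrite IHl by auto. rewrite H by auto. lra.
Qed.

Definition Sum (n : nat) (F : list Z -> R) : R := sum_list (all_steps n) F.

Lemma Sum_0 F : Sum 0 F = F [].
Proof. unfold Sum; simpl; lra. Qed.

Lemma Sum_S n F : Sum (S n) F = Sum n (fun s => F (1%Z :: s) + F ((-1)%Z :: s)).
Proof.
  unfold Sum; simpl. rewrite sum_list_flat_map.
  apply sum_list_ext. intros s _. simpl. lra.
Qed.

Lemma Sum_ext n F G : (forall s, In s (all_steps n) -> F s = G s) -> Sum n F = Sum n G.
Proof. apply sum_list_ext. Qed.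

Lemma Sum_le n F G : (forall s, In s (all_steps n) -> F s <= G s) -> Sum n F <= Sum n G.
Proof.
  unfold Sum. induction (all_steps n); simpl; intros H; [lra |].
  specialize (IHl (fun s Hs => H s (or_intror Hs))).
  specialize (H a (or_introl eq_refl)). lra.
Qed.

Lemma Sum_plus n F G : Sum n (fun s => F s + G s) = Sum n F + Sum n G.
Proof. unfold Sum. induction (all_steps n); simpl; [lra | rewrite IHl; lra]. Qed.

Lemma Sum_minus n F G : Sum n (fun s => F s - G s) = Sum n F - Sum n G.
Proof. unfold Sum. induction (all_steps n); simpl; [lra | rewrite IHl; lra]. Qed.

Lemma Sum_scal n c F : Sum n (fun s => c * F s) = c * Sum n F.
Proof. unfold Sum. induction (all_steps n); simpl; [lra | rewrite IHl; lra]. Qed.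

Lemma Sum_nonneg n F : (forall s, 0 <= F s) -> 0 <= Sum n F.
Proof.
  intros H. unfold Sum. induction (all_steps n); simpl; [lra |].
  specialize (H a); lra.
Qed.

Lemma Sum_const n c : Sum n (fun _ => c) = 2 ^ n * c.
Proof.
  induction n; [rewrite Sum_0; simpl; lra |].
  rewrite Sum_S, Sum_ext with (G := fun _ => 2 * c) by (intros; lra).
  rewrite Sum_scal, IHn. simpl; lra.
Qed.

Lemma in_all_steps n s : In s (all_steps n) ->
  length s = n /\ Forall (fun a => a = 1%Z \/ a = (-1)%Z) s.
Proof.
  revert s; induction n; simpl; intros s H.
  - destruct H as [<- | []]. split; auto.
  - apply in_flat_map in H. destruct H as [s' [Hs' H]].
    destruct (IHn s' Hs') as [Hl Hf].
    simpl in H. destruct H as [<- | [<- | []]]; simpl; split; auto.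
Qed.

Lemma Sum_split t j F : Sum (t + j) F = Sum t (fun p => Sum j (fun q => F (p ++ q))).
Proof.
  revert F; induction t; intros F.
  - rewrite Sum_0. reflexivity.
  - simpl plus. rewrite Sum_S, IHt, Sum_S.
    apply Sum_ext; intros p _. rewrite <- Sum_plus. reflexivity.
Qed.

(* Flipping every step is a bijection of the step sequences. *)
Lemma Sum_flip L F : Sum L (fun r => F (map Z.opp r)) = Sum L F.
Proof.
  revert F. induction L; intros F; [rewrite !Sum_0; reflexivity |].
  rewrite !Sum_S.
  transitivity (Sum L (fun s => (fun s => F ((-1)%Z :: s) + F (1%Z :: s)) (map Z.opp s)));
    [reflexivity |].
  rewrite (IHL (fun s => F ((-1)%Z :: s) + F (1%Z :: s))). apply Sum_ext. intros; lra.
Qed.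

Definition nsum (l : list nat) (f : nat -> R) : R :=
  fold_right (fun t acc => f t + acc) 0 l.

Lemma nsum_le l f g : (forall t, In t l -> f t <= g t) -> nsum l f <= nsum l g.
Proof.
  induction l; simpl; intros H; [lra |].
  specialize (IHl (fun s Hs => H s (or_intror Hs))).
  specialize (H a (or_introl eq_refl)). lra.
Qed.

Lemma nsum_scal l c f : nsum l (fun t => c * f t) = c * nsum l f.
Proof. induction l; simpl; [lra | rewrite IHl; lra]. Qed.

Lemma nsum_app l1 l2 f : nsum (l1 ++ l2) f = nsum l1 f + nsum l2 f.
Proof. induction l1; simpl; [lra | rewrite IHl1; lra]. Qed.

Lemma nsum_nonneg l f : (forall t, 0 <= f t) -> 0 <= nsum l f.
Proof. intros H. induction l; simpl; [lra |]. specialize (H a). lra. Qed.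

Lemma Sum_nsum n l (F : nat -> list Z -> R) :
  Sum n (fun s => nsum l (fun t => F t s)) = nsum l (fun t => Sum n (F t)).
Proof.
  induction l; simpl; [rewrite Sum_const; lra |].
  rewrite Sum_plus, IHl. reflexivity.
Qed.

Definition psum (l : list Z) : Z := fold_right Z.add 0%Z l.

Lemma psum_cons a s : psum (a :: s) = (a + psum s)%Z.
Proof. reflexivity. Qed.

Lemma psum_app a b : psum (a ++ b) = (psum a + psum b)%Z.
Proof. induction a; simpl; lia. Qed.

Lemma psum_opp r : psum (map Z.opp r) = (- psum r)%Z.
Proof. induction r; simpl; lia. Qed.

Lemma psum_bound n r : In r (all_steps n) -> (- Z.of_nat n <= psum r <= Z.of_nat n)%Z.
Proof.
  intros H. apply in_all_steps in H. destruct H as [Hl Hf]. subst n.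
  induction Hf; simpl; lia.
Qed.

Lemma pos_full y p : pos y p (length p) = (y + psum p)%Z.
Proof. unfold pos. rewrite firstn_all. reflexivity. Qed.

Lemma firstn_app_length (p q : list Z) : firstn (length p) (p ++ q) = p.
Proof. rewrite firstn_app, Nat.sub_diag. simpl. rewrite app_nil_r. apply firstn_all. Qed.

Lemma pos_app_le x p q i : (i <= length p)%nat -> pos x (p ++ q) i = pos x p i.
Proof.
  intros H. unfold pos. rewrite firstn_app.
  replace (i - length p)%nat with 0%nat by lia. simpl. rewrite app_nil_r. reflexivity.
Qed.

Lemma pos_app_ge x p q i : pos x (p ++ q) (length p + i) = pos (pos x p (length p)) q i.
Proof.
  unfold pos. rewrite firstn_app. replace (length p + i - length p)%nat with i by lia.
  rewrite (firstn_all2 (n := length p + i)) by lia. rewrite firstn_all.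
  fold (psum (p ++ firstn i q)) (psum p) (psum (firstn i q)). rewrite psum_app. lia.
Qed.

Lemma pos_increment x p q t k : length p = t -> (t <= k)%nat ->
  (pos x (p ++ q) k - pos x (p ++ q) t)%Z = psum (firstn (k - t) q).
Proof.
  intros Hl Hk. replace k with (length p + (k - t))%nat by lia.
  rewrite pos_app_ge, pos_app_le by lia. rewrite Hl.
  replace (t + (k - t) - t)%nat with (k - t)%nat by lia.
  unfold pos at 1. fold (psum (firstn (k - t) q)). lia.
Qed.

Lemma nonneg_path_spec x n s :
  nonneg_path x n s = true <-> forall i, (i <= n)%nat -> (0 <= pos x s i)%Z.
Proof.
  unfold nonneg_path. rewrite forallb_forall. split.
  - intros H i Hi. apply Z.leb_le, H, in_seq. lia.
  - intros H i Hi. apply in_seq in Hi. apply Z.leb_le, H. lia.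
Qed.

Lemma nonneg_path_app x p q j : nonneg_path x (length p + j) (p ++ q) =
  nonneg_path x (length p) p && nonneg_path (pos x p (length p)) j q.
Proof.
  apply Bool.eq_iff_eq_true. rewrite Bool.andb_true_iff, !nonneg_path_spec. split.
  - intros H. split.
    + intros i Hi. rewrite <- (pos_app_le x p q i) by lia. apply H; lia.
    + intros i Hi. rewrite <- pos_app_ge. apply H; lia.
  - intros [H1 H2] i Hi. destruct (Nat.le_gt_cases i (length p)).
    + rewrite pos_app_le by lia. apply H1; lia.
    + replace i with (length p + (i - length p))%nat by lia.
      rewrite pos_app_ge. apply H2; lia.
Qed.

Lemma nonneg_path_neg y N q : (y < 0)%Z -> nonneg_path y N q = false.
Proof.
  intros H. destruct (nonneg_path y N q) eqn:E; auto. rewrite nonneg_path_spec in E.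
  specialize (E 0%nat ltac:(lia)). unfold pos in E. simpl in E. lia.
Qed.

Lemma nonneg_path_end y p : nonneg_path y (length p) p = true -> (0 <= y + psum p)%Z.
Proof.
  intros H. rewrite nonneg_path_spec in H.
  specialize (H (length p) (le_n _)). rewrite pos_full in H. lia.
Qed.

Lemma nonneg_path_cons y L a s :
  ind (nonneg_path y (S L) (a :: s)) = ind (Z.leb 0 y) * ind (nonneg_path (y + a) L s).
Proof.
  change (S L) with (length [a] + L)%nat. change (a :: s) with ([a] ++ s).
  rewrite nonneg_path_app, ind_and. unfold nonneg_path at 1, pos. simpl.
  replace (y + (a + 0))%Z with (y + a)%Z by lia. rewrite Z.add_0_r.
  destruct (Z.leb_spec 0 y); destruct (Z.leb_spec 0 (y + a)); simpl; unfold ind; try lra.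
  rewrite nonneg_path_neg by lia. lra.
Qed.

Lemma nonneg_path_0 y : nonneg_path y 0 [] = Z.leb 0 y.
Proof. unfold nonneg_path, pos. simpl. rewrite Z.add_0_r. apply Bool.andb_true_r. Qed.

Definition Wsum (y : Z) (N : nat) (F : list Z -> R) : R :=
  Sum N (fun q => ind (nonneg_path y N q) * F q).

Lemma Pn_Wsum x n E : Pn x n E = Wsum x n (fun s => ind (E s)) / Wsum x n (fun _ => 1).
Proof.
  unfold Pn, paths. rewrite !length_filter_sum_list, sum_list_filter.
  unfold Wsum, Sum. f_equal. apply sum_list_ext; intros; lra.
Qed.

Lemma Wsum_markov x t j F : Wsum x (t + j) F =
  Sum t (fun p => ind (nonneg_path x t p) * Wsum (pos x p t) j (fun q => F (p ++ q))).
Proof.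
  unfold Wsum. rewrite Sum_split. apply Sum_ext. intros p Hp.
  destruct (in_all_steps _ _ Hp) as [Hl _]. subst t.
  rewrite <- Sum_scal. apply Sum_ext. intros q _. rewrite nonneg_path_app, ind_and. lra.
Qed.

Lemma Wsum_ext y N F G : (forall q, F q = G q) -> Wsum y N F = Wsum y N G.
Proof. intros H. apply Sum_ext. intros. rewrite H. reflexivity. Qed.

Lemma Wsum_le y N F G :
  (forall q, In q (all_steps N) -> nonneg_path y N q = true -> F q <= G q) ->
  Wsum y N F <= Wsum y N G.
Proof.
  intros H. apply Sum_le. intros q Hq.
  destruct (nonneg_path y N q) eqn:E; unfold ind; [specialize (H q Hq E) |]; lra.
Qed.

Lemma Wsum_plus y N F G : Wsum y N (fun q => F q + G q) = Wsum y N F + Wsum y N G.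
Proof. unfold Wsum. rewrite <- Sum_plus. apply Sum_ext. intros; lra. Qed.

Lemma Wsum_minus y N F G : Wsum y N (fun q => F q - G q) = Wsum y N F - Wsum y N G.
Proof. unfold Wsum. rewrite <- Sum_minus. apply Sum_ext. intros; lra. Qed.

Lemma Wsum_scal y N c F : Wsum y N (fun q => c * F q) = c * Wsum y N F.
Proof. unfold Wsum. rewrite <- Sum_scal. apply Sum_ext. intros; lra. Qed.

Lemma Wsum_nonneg y N F : (forall q, 0 <= F q) -> 0 <= Wsum y N F.
Proof.
  intros H. apply Sum_nonneg. intros q. specialize (H q).
  unfold ind; destruct nonneg_path; lra.
Qed.

Lemma Wsum_zero y N : Wsum y N (fun _ => 0) = 0.
Proof. unfold Wsum. rewrite Sum_ext with (G := fun _ => 0) by (intros; lra). rewrite Sum_const. lra. Qed.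

Lemma Wsum_nsum y N l (F : nat -> list Z -> R) :
  Wsum y N (fun s => nsum l (fun t => F t s)) = nsum l (fun t => Wsum y N (F t)).
Proof.
  unfold Wsum. rewrite <- Sum_nsum. apply Sum_ext. intros.
  induction l; simpl; [lra |]. rewrite <- IHl. lra.
Qed.

Lemma Wsum_neg y N F : (y < 0)%Z -> Wsum y N F = 0.
Proof.
  intros H. unfold Wsum. rewrite Sum_ext with (G := fun _ => 0).
  - rewrite Sum_const. lra.
  - intros q _. rewrite nonneg_path_neg by auto. unfold ind; lra.
Qed.

Lemma Wsum_0 z F : Wsum z 0 F = ind (Z.leb 0 z) * F [].
Proof. unfold Wsum. rewrite Sum_0, nonneg_path_0. reflexivity. Qed.

Lemma Wsum_S z M F : Wsum z (S M) F = ind (Z.leb 0 z) *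
  (Wsum (z + 1) M (fun q => F (1%Z :: q)) + Wsum (z - 1) M (fun q => F ((-1)%Z :: q))).
Proof.
  unfold Wsum at 1. rewrite Sum_S.
  rewrite (Sum_ext _ _ (fun q => ind (Z.leb 0 z) *
    (ind (nonneg_path (z + 1) M q) * F (1%Z :: q) +
     ind (nonneg_path (z - 1) M q) * F ((-1)%Z :: q)))).
  - rewrite Sum_scal, Sum_plus. reflexivity.
  - intros q _. rewrite !nonneg_path_cons. replace (z + -1)%Z with (z - 1)%Z by lia. lra.
Qed.

Definition npaths (M : nat) (z : Z) : R := Wsum z M (fun _ => 1).

Lemma Wsum_markov_prefix y L M (F : list Z -> R) (g : list Z -> R) :
  (forall p q, length p = L -> F (p ++ q) = g p) ->
  Wsum y (L + M) F = Wsum y L (fun p => g p * npaths M (y + psum p)).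
Proof.
  intros H. rewrite Wsum_markov. apply Sum_ext. intros p Hp.
  destruct (in_all_steps _ _ Hp) as [Hl _]. f_equal. subst L.
  rewrite pos_full. unfold npaths. rewrite <- Wsum_scal.
  apply Wsum_ext. intros q. rewrite H by auto. lra.
Qed.

(** * Concavity of the number of non-negative paths *)

Lemma npaths_0 z : npaths 0 z = ind (Z.leb 0 z).
Proof. unfold npaths. rewrite Wsum_0. lra. Qed.

Lemma npaths_S M z : npaths (S M) z = ind (Z.leb 0 z) * (npaths M (z + 1) + npaths M (z - 1)).
Proof. apply Wsum_S. Qed.

Lemma npaths_neg M z : (z < 0)%Z -> npaths M z = 0.
Proof. apply Wsum_neg. Qed.

Lemma npaths_nonneg M z : 0 <= npaths M z.
Proof. apply Wsum_nonneg. intros; lra. Qed.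

(* From any z >= 0 the path staying at the top (always stepping up) exists. *)
Lemma npaths_ge_1 M z : (0 <= z)%Z -> 1 <= npaths M z.
Proof.
  revert z. induction M; intros z Hz.
  - rewrite npaths_0. destruct (Z.leb_spec 0 z); unfold ind; lia || lra.
  - rewrite npaths_S. destruct (Z.leb_spec 0 z); [| lia]. unfold ind.
    pose proof (IHM (z + 1)%Z ltac:(lia)). pose proof (npaths_nonneg M (z - 1)). lra.
Qed.

Definition npaths_incr (M : nat) (z : Z) : R := npaths M z - npaths M (z - 1).

(* They satisfy the same recursion as
   [npaths] away from 0, and at 0 the boundary term is symmetric. *)
Lemma npaths_concave M : forall z, (0 <= z)%Z ->
  0 <= npaths_incr M (z + 1) <= npaths_incr M z.
Proof.
  induction M; intros z Hz.
  - unfold npaths_incr. rewrite !npaths_0. replace (z + 1 - 1)%Z with z by lia.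
    destruct (Z.leb_spec 0 (z + 1)); destruct (Z.leb_spec 0 z); destruct (Z.leb_spec 0 (z - 1));
      unfold ind; try lia; lra.
  - assert (Hrec : forall w, (1 <= w)%Z ->
              npaths_incr (S M) w = npaths_incr M (w + 1) + npaths_incr M (w - 1)).
    { intros w Hw. unfold npaths_incr. rewrite !npaths_S.
      destruct (Z.leb_spec 0 w); destruct (Z.leb_spec 0 (w - 1)); try lia. unfold ind.
      replace (w + 1 - 1)%Z with w by lia. replace (w - 1 + 1)%Z with w by lia. lra. }
    assert (Hrec0 : npaths_incr (S M) 0 = npaths_incr M 1 + npaths_incr M 0).
    { unfold npaths_incr. rewrite (npaths_neg (S M) (0 - 1)) by lia. rewrite npaths_S.
      simpl. rewrite (npaths_neg M (-1)) by lia. unfold ind. lra. }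
    rewrite Hrec by lia. replace (z + 1 + 1)%Z with (z + 2)%Z by lia.
    replace (z + 1 - 1)%Z with z by lia.
    destruct (Z.eq_dec z 0).
    + subst. rewrite Hrec0. pose proof (IHM 0%Z ltac:(lia)). pose proof (IHM 1%Z ltac:(lia)).
      simpl in *. lra.
    + rewrite Hrec by lia. pose proof (IHM z Hz). pose proof (IHM (z + 1)%Z ltac:(lia)).
      pose proof (IHM (z - 1)%Z ltac:(lia)). replace (z + 1 + 1)%Z with (z + 2)%Z in * by lia.
      replace (z - 1 + 1)%Z with z in * by lia. lra.
Qed.

Section ConcaveRatio.

Variable g : Z -> R.
Hypothesis g_nonneg : forall z, 0 <= g z.
Hypothesis g_at_m1 : g (-1)%Z = 0.
Hypothesis g_concave : forall z, (0 <= z)%Z -> 0 <= g (z + 1) - g z <= g z - g (z - 1).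

(* The chord from -1 to k lies above the tangent: (k+1) g'(k+1) <= g(k). *)
Lemma concave_tangent (k : nat) :
  (INR k + 1) * (g (Z.of_nat k + 1) - g (Z.of_nat k)) <= g (Z.of_nat k).
Proof.
  induction k.
  - pose proof (g_concave 0 ltac:(lia)). simpl in *. rewrite g_at_m1 in *. lra.
  - rewrite Nat2Z.inj_succ. unfold Z.succ.
    pose proof (g_concave (Z.of_nat k + 1) ltac:(lia)).
    replace (Z.of_nat k + 1 - 1)%Z with (Z.of_nat k) in H by lia.
    rewrite S_INR. pose proof (pos_INR k). nra.
Qed.

Lemma concave_ratio_step z : (0 <= z)%Z -> g (z + 1) * (IZR z + 1) <= g z * (IZR z + 2).
Proof.
  intros Hz. replace z with (Z.of_nat (Z.to_nat z)) by lia.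
  pose proof (concave_tangent (Z.to_nat z)). rewrite <- INR_IZR_INZ. nra.
Qed.

Lemma concave_ratio w z : (0 <= w <= z)%Z -> g z * (IZR w + 1) <= g w * (IZR z + 1).
Proof.
  intros H. replace z with (w + Z.of_nat (Z.to_nat (z - w)))%Z by lia.
  induction (Z.to_nat (z - w)) as [| k IH].
  - rewrite Z.add_0_r. lra.
  - rewrite Nat2Z.inj_succ. replace (w + Z.succ (Z.of_nat k))%Z with (w + Z.of_nat k + 1)%Z by lia.
    pose proof (concave_ratio_step (w + Z.of_nat k) ltac:(lia)).
    assert (0 <= IZR w) by (apply IZR_le; lia).
    assert (0 <= IZR (w + Z.of_nat k)) by (apply IZR_le; lia).
    pose proof (g_nonneg w). pose proof (g_nonneg (w + Z.of_nat k + 1)).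
    rewrite plus_IZR.
    set (a := g (w + Z.of_nat k + 1)) in *. set (b := g (w + Z.of_nat k)) in *.
    set (c := IZR (w + Z.of_nat k)) in *.
    apply (Rmult_le_reg_r (c + 1)); [lra |]. nra.
Qed.

End ConcaveRatio.

Lemma npaths_ratio M w z : (0 <= w <= z)%Z ->
  npaths M z * (IZR w + 1) <= npaths M w * (IZR z + 1).
Proof.
  apply concave_ratio.
  - apply npaths_nonneg.
  - apply npaths_neg; lia.
  - intros y Hy. pose proof (npaths_concave M y Hy). unfold npaths_incr in H.
    replace (y + 1 - 1)%Z with y in H by lia. lra.
Qed.

(** * Hoeffding's bound for the free walk *)

Lemma exp_le_compat x y : x <= y -> exp x <= exp y.
Proof. intros [H | H]; [left; apply exp_increasing; auto | subst; lra]. Qed.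

Lemma exp_pow x n : exp x ^ n = exp (INR n * x).
Proof.
  induction n; [simpl; rewrite Rmult_0_l, exp_0; lra |].
  rewrite S_INR. simpl. rewrite IHn, <- exp_plus. f_equal. lra.
Qed.

Lemma Sum_exp L c : Sum L (fun r => exp (c * IZR (psum r))) = (exp c + exp (- c)) ^ L.
Proof.
  induction L.
  - rewrite Sum_0. simpl. rewrite Rmult_0_r, exp_0. reflexivity.
  - rewrite Sum_S.
    rewrite Sum_ext with (G := fun s => (exp c + exp (- c)) * exp (c * IZR (psum s))).
    + rewrite Sum_scal, IHL. reflexivity.
    + intros s _. rewrite !psum_cons, !plus_IZR, !Rmult_plus_distr_l, !exp_plus.
      replace (c * IZR 1) with c by (simpl; ring).
      replace (c * IZR (-1)) with (- c) by (simpl; ring). ring.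
Qed.

Lemma chernoff_mgf L a l : 0 <= l ->
  Sum L (fun r => ind_le a (IZR (psum r))) <= exp (- (l * a)) * (exp l + exp (- l)) ^ L.
Proof.
  intros Hl. rewrite <- Sum_exp, <- Sum_scal. apply Sum_le. intros r _.
  rewrite <- exp_plus. unfold ind_le. destruct Rle_dec.
  - rewrite <- exp_0. apply exp_le_compat. nra.
  - left. apply exp_pos.
Qed.

Lemma exp_mul_one_minus l : 0 <= l < 1 -> exp l * (1 - l) <= 1.
Proof.
  intros H. pose proof (exp_ineq1_le (- l)) as E. rewrite exp_Ropp in E.
  pose proof (exp_pos l). apply (Rmult_le_reg_r (/ exp l)); [apply Rinv_0_lt_compat; lra |].
  rewrite Rmult_comm, <- Rmult_assoc, Rinv_l by lra. lra.
Qed.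

Lemma cosh_bound l : 0 <= l -> l * l <= 1 / 2 -> exp l + exp (- l) <= 2 * exp (2 * (l * l)).
Proof.
  intros H0 H1. assert (Hl1 : l < 1) by nra.
  pose proof (exp_mul_one_minus l ltac:(lra)) as E1.
  pose proof (exp_ineq1_le l) as E2. rewrite exp_Ropp.
  pose proof (exp_pos l) as E3.
  pose proof (exp_ineq1_le (2 * (l * l))) as E4.
  set (e := exp l) in *. set (g := exp (2 * (l * l))) in *.
  assert (Hinv : / e * (1 + l) <= 1).
  { apply (Rmult_le_reg_l e); [lra |]. rewrite <- Rmult_assoc, Rinv_r by lra. lra. }
  assert (Hi : / e > 0) by (apply Rinv_0_lt_compat; lra).
  set (ie := / e) in *.
  (* multiply through by 1 - l^2 and compare term by term *)
  assert (Ha : e * (1 - l * l) <= 1 + l).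
  { replace (e * (1 - l * l)) with ((e * (1 - l)) * (1 + l)) by ring.
    apply Rmult_le_compat_r with (r := 1 + l) in E1; lra. }
  assert (Hb : ie * (1 - l * l) <= 1 - l).
  { replace (ie * (1 - l * l)) with ((ie * (1 + l)) * (1 - l)) by ring.
    apply Rmult_le_compat_r with (r := 1 - l) in Hinv; lra. }
  assert (Hc : 1 <= g * (1 - l * l)).
  { assert ((1 + 2 * (l * l)) * (1 - l * l) <= g * (1 - l * l)) by (apply Rmult_le_compat_r; lra).
    assert (1 <= (1 + 2 * (l * l)) * (1 - l * l)) by nra. lra. }
  apply (Rmult_le_reg_r (1 - l * l)); lra.
Qed.

Lemma hoeffding_up L a : (1 <= L)%nat -> 0 < a ->
  Sum L (fun r => ind_le a (IZR (psum r))) <= 2 ^ L * exp (- (a * a) / (8 * INR L)).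
Proof.
  intros HL Ha. assert (HL' : 1 <= INR L) by (apply (le_INR 1); lia).
  pose proof (pow_lt 2 L ltac:(lra)). pose proof (exp_pos (- (a * a) / (8 * INR L))).
  destruct (Rle_dec a (INR L)) as [Hal | Hal].
  - set (l := a / (4 * INR L)).
    assert (Hl0 : 0 <= l) by (unfold l; apply Rmult_le_pos; [lra | left; apply Rinv_0_lt_compat; lra]).
    assert (Hl1 : l <= 1 / 4).
    { unfold l. apply (Rmult_le_reg_r (4 * INR L)); [lra |].
      unfold Rdiv. rewrite Rmult_assoc, Rinv_l by lra. lra. }
    eapply Rle_trans; [apply (chernoff_mgf L a l Hl0) |].
    assert (Hcosh : (exp l + exp (- l)) ^ L <= (2 * exp (2 * (l * l))) ^ L).
    { apply pow_incr. split; [pose proof (exp_pos l); pose proof (exp_pos (- l)); lra |].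
      apply cosh_bound; nra. }
    rewrite Rpow_mult_distr, exp_pow in Hcosh.
    pose proof (exp_pos (- (l * a))).
    eapply Rle_trans; [apply Rmult_le_compat_l; [lra | exact Hcosh] |].
    rewrite <- Rmult_assoc, (Rmult_comm (exp _)), Rmult_assoc, <- exp_plus.
    apply Rmult_le_compat_l; [lra |].
    replace (- (l * a) + INR L * (2 * (l * l))) with (- (a * a) / (8 * INR L)); [lra |].
    unfold l. field. lra.
  - (* a > L cannot be reached in L steps *)
    eapply Rle_trans with (Sum L (fun _ => 0)).
    + apply Sum_le. intros r Hr. apply psum_bound in Hr. unfold ind_le.
      destruct Rle_dec as [Hr' |]; [| lra]. exfalso. apply Hal.
      eapply Rle_trans; [exact Hr' |]. rewrite INR_IZR_INZ. apply IZR_le. lia.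
    + rewrite Sum_const. nra.
Qed.

Lemma hoeffding_down L b : (1 <= L)%nat -> 0 < b ->
  Sum L (fun r => ind_le (IZR (psum r)) (- b)) <= 2 ^ L * exp (- (b * b) / (8 * INR L)).
Proof.
  intros HL Hb. rewrite <- Sum_flip.
  eapply Rle_trans; [| apply (hoeffding_up L b HL Hb)].
  right. apply Sum_ext. intros r _. rewrite psum_opp, opp_IZR. unfold ind_le.
  destruct Rle_dec; destruct Rle_dec; auto; lra.
Qed.

(** * Downward deviations under the conditioning (Harris' inequality) *)

Definition coord_incr (F : list Z -> R) : Prop :=
  forall s s', Forall2 Z.le s s' -> F s <= F s'.

Lemma Forall2_le_refl s : Forall2 Z.le s s.
Proof. induction s; constructor; auto; lia. Qed.

Lemma harris n : forall F G, coord_incr F -> coord_incr (fun s => - G s) ->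
  2 ^ n * Sum n (fun s => F s * G s) <= Sum n F * Sum n G.
Proof.
  induction n; intros F G HF HG.
  - rewrite !Sum_0. simpl. lra.
  - rewrite !Sum_S, !Sum_plus.
    assert (Hcons : forall H a, coord_incr H -> coord_incr (fun s => H (a :: s))).
    { intros H a HH s s' Hs. apply HH. constructor; auto; lia. }
    pose proof (IHn _ _ (Hcons F 1%Z HF) (Hcons _ 1%Z HG)) as Hup.
    pose proof (IHn _ _ (Hcons F (-1)%Z HF) (Hcons _ (-1)%Z HG)) as Hdown.
    simpl in Hup, Hdown.
    assert (Sum n (fun s => F ((-1)%Z :: s)) <= Sum n (fun s => F (1%Z :: s))).
    { apply Sum_le. intros s _. apply HF. constructor; [lia | apply Forall2_le_refl]. }
    assert (Sum n (fun s => G (1%Z :: s)) <= Sum n (fun s => G ((-1)%Z :: s))).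
    { apply Sum_le. intros s _.
      assert (- G ((-1)%Z :: s) <= - G (1%Z :: s)); [| lra].
      apply HG. constructor; [lia | apply Forall2_le_refl]. }
    set (a1 := Sum n (fun s => F (1%Z :: s))) in *.
    set (a0 := Sum n (fun s => F ((-1)%Z :: s))) in *.
    set (b1 := Sum n (fun s => G (1%Z :: s))) in *.
    set (b0 := Sum n (fun s => G ((-1)%Z :: s))) in *.
    simpl pow. nra.
Qed.

Lemma psum_firstn_mono s s' i : Forall2 Z.le s s' -> (psum (firstn i s) <= psum (firstn i s'))%Z.
Proof.
  intros H. revert i. induction H; intros i; destruct i; simpl; try lia.
  specialize (IHForall2 i). lia.
Qed.

Lemma nonneg_path_incr y N : coord_incr (fun s => ind (nonneg_path y N s)).
Proof.
  intros s s' H. unfold ind.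
  destruct (nonneg_path y N s) eqn:E1; destruct (nonneg_path y N s') eqn:E2; try lra.
  exfalso. rewrite nonneg_path_spec in E1.
  assert (nonneg_path y N s' = true); [| congruence].
  rewrite nonneg_path_spec. intros i Hi. specialize (E1 i Hi).
  unfold pos in *. fold (psum (firstn i s)) (psum (firstn i s')) in *.
  pose proof (psum_firstn_mono s s' i H). lia.
Qed.

Lemma cond_drop_bound y N L b : (1 <= L <= N)%nat -> 0 < b ->
  Wsum y N (fun q => ind_le (IZR (psum (firstn L q))) (- b))
  <= exp (- (b * b) / (8 * INR L)) * Wsum y N (fun _ => 1).
Proof.
  intros HL Hb. unfold Wsum.
  assert (Hdec : coord_incr (fun s => - ind_le (IZR (psum (firstn L s))) (- b))).
  { intros s s' H. pose proof (psum_firstn_mono s s' L H) as Hm. apply IZR_le in Hm.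
    unfold ind_le. destruct Rle_dec; destruct Rle_dec; lra. }
  pose proof (harris N _ _ (nonneg_path_incr y N) Hdec) as Hh.
  (* the drop only depends on the first L steps: Hoeffding applies *)
  assert (Hfree : Sum N (fun q => ind_le (IZR (psum (firstn L q))) (- b))
                  <= 2 ^ N * exp (- (b * b) / (8 * INR L))).
  { replace N with (L + (N - L))%nat by lia. rewrite Sum_split.
    rewrite (Sum_ext L _ (fun p => 2 ^ (N - L) * ind_le (IZR (psum p)) (- b))).
    - rewrite Sum_scal, pow_add.
      replace (2 ^ L * 2 ^ (N - L) * exp (- (b * b) / (8 * INR L)))
        with (2 ^ (N - L) * (2 ^ L * exp (- (b * b) / (8 * INR L)))) by ring.
      apply Rmult_le_compat_l; [left; apply pow_lt; lra |].
      apply hoeffding_down; [lia | lra].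
    - intros p Hp. destruct (in_all_steps _ _ Hp) as [Hl _].
      rewrite <- Sum_const. apply Sum_ext. intros q _. rewrite <- Hl, firstn_app_length.
      reflexivity. }
  rewrite (Sum_ext N (fun q => ind (nonneg_path y N q) * 1) (fun q => ind (nonneg_path y N q)))
    by (intros; lra).
  assert (H0 : 0 <= Sum N (fun s => ind (nonneg_path y N s)))
    by (apply Sum_nonneg; intros; unfold ind; destruct nonneg_path; lra).
  pose proof (pow_lt 2 N ltac:(lra)).
  apply (Rmult_le_reg_l (2 ^ N)); [lra |].
  eapply Rle_trans; [exact Hh |].
  rewrite Rmult_comm, <- Rmult_assoc. apply Rmult_le_compat_r; [exact H0 |].
  rewrite Rmult_comm, (Rmult_comm (exp _)). exact Hfree.
Qed.

(** * Upward deviations under the conditioning *)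

(* Reflection principle: for h vanishing below -1, the paths from y >= 0
   that hit -1 are in bijection with the free paths from -y-2. *)
Lemma reflection L : forall y (h : Z -> R), (0 <= y)%Z -> (forall z, (z <= -2)%Z -> h z = 0) ->
  Wsum y L (fun r => h (y + psum r)%Z) =
  Sum L (fun r => h (y + psum r)%Z) - Sum L (fun r => h (- y - 2 + psum r)%Z).
Proof.
  induction L; intros y h Hy Hh.
  - rewrite Wsum_0, !Sum_0. simpl. rewrite (Hh (- y - 2 + 0)%Z) by lia.
    destruct (Z.leb_spec 0 y); [| lia]. unfold ind. lra.
  - rewrite Wsum_S, !Sum_S, <- Sum_minus. destruct (Z.leb_spec 0 y); [| lia]. unfold ind.
    rewrite (Wsum_ext _ _ _ (fun q => h (y + 1 + psum q)%Z))
      by (intros q; cbv beta; rewrite psum_cons; f_equal; lia).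
    rewrite (Wsum_ext (y - 1) L _ (fun q => h (y - 1 + psum q)%Z))
      by (intros q; cbv beta; rewrite psum_cons; f_equal; lia).
    rewrite (IHL (y + 1)%Z h) by (auto; lia).
    assert (Hlow : Wsum (y - 1) L (fun q => h (y - 1 + psum q)%Z) =
                   Sum L (fun r => h (y - 1 + psum r)%Z) - Sum L (fun r => h (- y - 1 + psum r)%Z)).
    { destruct (Z.eq_dec y 0) as [-> | Hy0].
      - (* from 0 the down-step is killed, and it is its own reflection *)
        rewrite Wsum_neg by lia. rewrite <- Sum_minus, Sum_ext with (G := fun _ => 0).
        + rewrite Sum_const. lra.
        + intros r _. replace (- 0 - 1)%Z with (0 - 1)%Z by lia. lra.
      - rewrite (IHL (y - 1)%Z h) by (auto; lia).
        f_equal. apply Sum_ext. intros r _. f_equal. lia. }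
    rewrite Hlow, <- !Sum_minus, <- Sum_plus, Rmult_1_l. apply Sum_ext. intros s _.
    rewrite !psum_cons.
    replace (y + (1 + psum s))%Z with (y + 1 + psum s)%Z by lia.
    replace (y + (-1 + psum s))%Z with (y - 1 + psum s)%Z by lia.
    replace (- y - 2 + (1 + psum s))%Z with (- y - 1 + psum s)%Z by lia.
    replace (- y - 2 + (-1 + psum s))%Z with (- (y + 1) - 2 + psum s)%Z by lia. lra.
Qed.

Lemma harmonic L : forall y, (0 <= y)%Z ->
  Wsum y L (fun r => IZR (y + psum r) + 1) = (IZR y + 1) * 2 ^ L.
Proof.
  induction L; intros y Hy.
  - rewrite Wsum_0. destruct (Z.leb_spec 0 y); [| lia]. simpl. unfold ind.
    rewrite Z.add_0_r. lra.
  - rewrite Wsum_S. destruct (Z.leb_spec 0 y); [| lia]. unfold ind.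
    rewrite (Wsum_ext _ _ _ (fun q => IZR (y + 1 + psum q) + 1))
      by (intros q; cbv beta; rewrite psum_cons; do 2 f_equal; lia).
    rewrite (Wsum_ext (y - 1) L _ (fun q => IZR (y - 1 + psum q) + 1))
      by (intros q; cbv beta; rewrite psum_cons; do 2 f_equal; lia).
    rewrite IHL by lia.
    destruct (Z.eq_dec y 0) as [-> | Hy0].
    + rewrite Wsum_neg by lia. simpl. lra.
    + rewrite IHL by lia. rewrite !plus_IZR, !minus_IZR. simpl. lra.
Qed.

Definition ways (L : nat) (j : Z) : R := Sum L (fun r => ind (Z.eqb (psum r) j)).

Lemma ways_0 j : ways 0 j = ind (Z.eqb 0 j).
Proof. unfold ways. rewrite Sum_0. reflexivity. Qed.

Lemma ways_S L j : ways (S L) j = ways L (j - 1) + ways L (j + 1).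
Proof.
  unfold ways. rewrite Sum_S, Sum_plus.
  f_equal; apply Sum_ext; intros s _; rewrite psum_cons;
    f_equal; apply Bool.eq_iff_eq_true; rewrite !Z.eqb_eq; lia.
Qed.

Lemma ways_nonneg L j : 0 <= ways L j.
Proof. apply Sum_nonneg. intros; unfold ind; destruct Z.eqb; lra. Qed.

Lemma ways_sym L : forall j, ways L (- j) = ways L j.
Proof.
  induction L; intros j.
  - rewrite !ways_0. f_equal. apply Bool.eq_iff_eq_true; rewrite !Z.eqb_eq; lia.
  - rewrite !ways_S. replace (- j - 1)%Z with (- (j + 1))%Z by lia.
    replace (- j + 1)%Z with (- (j - 1))%Z by lia. rewrite !IHL. lra.
Qed.

Lemma ways_unimodal L : forall j, (-1 <= j)%Z -> ways L (j + 2) <= ways L j.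
Proof.
  induction L; intros j Hj.
  - rewrite !ways_0.
    destruct (Z.eqb_spec 0 (j + 2)); destruct (Z.eqb_spec 0 j); unfold ind; try lia; lra.
  - destruct (Z.eq_dec j (-1)) as [-> | Hj1].
    + simpl. replace 1%Z with (- (-1))%Z by lia. rewrite ways_sym. lra.
    + rewrite !ways_S. replace (j + 2 - 1)%Z with (j + 1)%Z by lia.
      replace (j + 2 + 1)%Z with ((j + 1) + 2)%Z by lia.
      pose proof (IHL (j + 1)%Z ltac:(lia)). pose proof (IHL (j - 1)%Z ltac:(lia)) as H'.
      replace (j - 1 + 2)%Z with (j + 1)%Z in H' by lia. lra.
Qed.

Lemma ways_unimodal_iter L j t : (-1 <= j)%Z -> ways L (j + 2 * Z.of_nat t) <= ways L j.
Proof.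
  intros Hj. induction t; [replace (j + 2 * Z.of_nat 0)%Z with j by lia; lra |].
  replace (j + 2 * Z.of_nat (S t))%Z with ((j + 2 * Z.of_nat t) + 2)%Z by lia.
  pose proof (ways_unimodal L (j + 2 * Z.of_nat t) ltac:(lia)). lra.
Qed.

Definition between (lo hi s : Z) : R := ind (Z.leb lo s) * ind (Z.leb s hi).

(* By unimodality, the t+1 endpoints j, j-2, ..., j-2t are each reached
   at least [ways L j] times. *)
Lemma between_count L j t : (-1 <= j - 2 * Z.of_nat t)%Z ->
  (INR t + 1) * ways L j <= Sum L (fun r => between (j - 2 * Z.of_nat t) j (psum r)).
Proof.
  intros H. induction t.
  - simpl. rewrite Rplus_0_l, Rmult_1_l. right. apply Sum_ext. intros r _. unfold between.
    rewrite Z.sub_0_r.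
    destruct (Z.eqb_spec (psum r) j); destruct (Z.leb_spec j (psum r));
      destruct (Z.leb_spec (psum r) j); unfold ind; try lia; lra.
  - rewrite S_INR. specialize (IHt ltac:(lia)).
    pose proof (ways_unimodal_iter L (j - 2 * Z.of_nat (S t)) (S t) H) as Hu.
    replace (j - 2 * Z.of_nat (S t) + 2 * Z.of_nat (S t))%Z with j in Hu by lia.
    assert (Sum L (fun r => between (j - 2 * Z.of_nat t) j (psum r)) + ways L (j - 2 * Z.of_nat (S t))
            <= Sum L (fun r => between (j - 2 * Z.of_nat (S t)) j (psum r))).
    { unfold ways. rewrite <- Sum_plus. apply Sum_le. intros r _. unfold between.
      destruct (Z.leb_spec (j - 2 * Z.of_nat t) (psum r)); destruct (Z.leb_spec (psum r) j);
        destruct (Z.eqb_spec (psum r) (j - 2 * Z.of_nat (S t)));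
        destruct (Z.leb_spec (j - 2 * Z.of_nat (S t)) (psum r)); unfold ind; try lia; lra. }
    lra.
Qed.

(* Local Gaussian bound: j * ways L j <= 4 * 2^L exp(-j^2/(32L)).  Take
   t = j/4 in [between_count] and apply Hoeffding to psum >= j/2. *)
Lemma ways_local_bound L j : (1 <= L)%nat -> (1 <= j)%Z ->
  IZR j * ways L j <= 4 * (2 ^ L * exp (- (IZR j * IZR j) / (32 * INR L))).
Proof.
  intros HL Hj. set (t := Z.to_nat (j / 4)).
  pose proof (Z.div_mod j 4 ltac:(lia)). pose proof (Z.mod_pos_bound j 4 ltac:(lia)).
  assert (Ht : Z.of_nat t = (j / 4)%Z) by (unfold t; rewrite Z2Nat.id; [lia | apply Z.div_pos; lia]).
  pose proof (between_count L j t ltac:(lia)) as Hcount.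
  assert (Hhalf : Sum L (fun r => between (j - 2 * Z.of_nat t) j (psum r))
                  <= Sum L (fun r => ind_le (IZR j / 2) (IZR (psum r)))).
  { apply Sum_le. intros r _. unfold between, ind_le.
    destruct Rle_dec as [| Hn]; destruct (Z.leb_spec (j - 2 * Z.of_nat t) (psum r));
      destruct (Z.leb_spec (psum r) j); unfold ind; try lra.
    exfalso. apply Hn.
    assert (Hq : (j <= 2 * psum r)%Z) by lia. apply IZR_le in Hq. rewrite mult_IZR in Hq. lra. }
  assert (Hj0 : 0 < IZR j / 2) by (apply IZR_le in Hj; lra).
  pose proof (hoeffding_up L (IZR j / 2) HL Hj0) as Hc.
  replace (- (IZR j / 2 * (IZR j / 2)) / (8 * INR L)) with (- (IZR j * IZR j) / (32 * INR L)) in Hc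
    by (field; apply not_0_INR; lia).
  assert (Ht4 : IZR j <= 4 * (INR t + 1)).
  { rewrite INR_IZR_INZ, Ht. assert (Hq : (j <= 4 * (j / 4 + 1))%Z) by lia. apply IZR_le in Hq.
    rewrite mult_IZR, plus_IZR in Hq. lra. }
  pose proof (ways_nonneg L j) as HB.
  assert (IZR j * ways L j <= 4 * (INR t + 1) * ways L j) by (apply Rmult_le_compat_r; lra).
  lra.
Qed.

Lemma gauss_antitone L j b : (1 <= L)%nat -> (1 <= b <= j)%Z ->
  exp (- (IZR j * IZR j) / (32 * INR L)) <= exp (- (IZR b * IZR b) / (32 * INR L)).
Proof.
  intros HL Hb. apply exp_le_compat. assert (1 <= INR L) by (apply (le_INR 1); lia).
  assert (IZR b * IZR b <= IZR j * IZR j).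
  { assert (1 <= IZR b) by (apply IZR_le; lia). assert (IZR b <= IZR j) by (apply IZR_le; lia). nra. }
  unfold Rdiv. apply Rmult_le_compat_r; [left; apply Rinv_0_lt_compat |]; lra.
Qed.

Lemma window_bound L b K : (1 <= L)%nat -> (1 <= b)%Z ->
  Sum L (fun r => between b (b + Z.of_nat K) (psum r) * IZR (psum r))
  <= (INR K + 1) * (4 * (2 ^ L * exp (- (IZR b * IZR b) / (32 * INR L)))).
Proof.
  intros HL Hb. induction K.
  - simpl. rewrite Rplus_0_l, Rmult_1_l.
    eapply Rle_trans; [| apply (ways_local_bound L b HL Hb)].
    right. unfold ways. rewrite <- Sum_scal. apply Sum_ext. intros r _. unfold between.
    rewrite Z.add_0_r.
    destruct (Z.eqb_spec (psum r) b); destruct (Z.leb_spec b (psum r));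
      destruct (Z.leb_spec (psum r) b); unfold ind; try lia; try lra. subst. lra.
  - rewrite S_INR. set (j := (b + Z.of_nat (S K))%Z).
    pose proof (ways_local_bound L j HL ltac:(unfold j; lia)).
    pose proof (gauss_antitone L j b HL ltac:(unfold j; lia)).
    assert (Hsplit : Sum L (fun r => between b j (psum r) * IZR (psum r)) =
            Sum L (fun r => between b (b + Z.of_nat K) (psum r) * IZR (psum r)) + IZR j * ways L j).
    { unfold ways. rewrite <- Sum_scal, <- Sum_plus. apply Sum_ext. intros r _. unfold between.
      destruct (Z.eqb_spec (psum r) j); destruct (Z.leb_spec b (psum r));
        destruct (Z.leb_spec (psum r) (b + Z.of_nat K)); destruct (Z.leb_spec (psum r) j);
        unfold j in *; unfold ind; try lia; try lra.
      rewrite e. lra. }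
    rewrite Hsplit. pose proof (pow_lt 2 L ltac:(lra)).
    pose proof (exp_pos (- (IZR j * IZR j) / (32 * INR L))). nra.
Qed.

Lemma reflected_weight_le y b r : (0 <= y)%Z -> (1 <= b)%Z ->
  ind (Z.leb (y + b) (y + r)) * (IZR (y + r) + 1)
    - ind (Z.leb (y + b) (- y - 2 + r)) * (IZR (- y - 2 + r) + 1)
  <= 2 * (IZR y + 1) * ind_le (IZR b) (IZR r) + between b (b + (2 * y + 1)) r * IZR r.
Proof.
  intros Hy Hb. unfold ind_le, between, ind.
  rewrite !plus_IZR, !minus_IZR, !opp_IZR.
  assert (0 <= IZR y) by (apply IZR_le; lia).
  destruct (Z.le_gt_cases b r) as [Hbr | Hbr].
  - destruct Rle_dec as [_ | Hn]; [| exfalso; apply Hn, IZR_le; lia].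
    assert (IZR b <= IZR r) by (apply IZR_le; lia).
    assert (0 <= IZR r) by (apply IZR_le; lia).
    destruct (Z.leb_spec (y + b) (y + r)); [| lia].
    destruct (Z.leb_spec b r); [| lia].
    (* the reflected term is active exactly beyond the window *)
    destruct (Z.leb_spec (y + b) (- y - 2 + r));
      destruct (Z.leb_spec r (b + (2 * y + 1))); simpl; try (exfalso; lia); lra.
  - destruct Rle_dec as [Hn | _]; [apply le_IZR in Hn; lia |].
    destruct (Z.leb_spec (y + b) (y + r)); [lia |].
    destruct (Z.leb_spec (y + b) (- y - 2 + r)); [lia |].
    destruct (Z.leb_spec b r); [lia |]. lra.
Qed.

Lemma harmonic_tail_bound L y b : (1 <= L)%nat -> (0 <= y)%Z -> (1 <= b)%Z ->
  Wsum y L (fun r => ind (Z.leb b (psum r)) * (IZR (y + psum r) + 1))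
  <= 10 * ((IZR y + 1) * 2 ^ L) * exp (- (IZR b * IZR b) / (32 * INR L)).
Proof.
  intros HL Hy Hb.
  set (h := fun z => ind (Z.leb (y + b) z) * (IZR z + 1)).
  rewrite (Wsum_ext _ _ _ (fun r => h (y + psum r)%Z)).
  2:{ intros r. unfold h. do 2 f_equal.
      apply Bool.eq_iff_eq_true. rewrite !Z.leb_le. lia. }
  rewrite reflection; [| exact Hy |].
  2:{ intros z Hz. unfold h. destruct (Z.leb_spec (y + b) z); [lia | unfold ind; lra]. }
  set (K := Z.to_nat (2 * y + 1)).
  assert (HK : Z.of_nat K = (2 * y + 1)%Z) by (unfold K; lia).
  rewrite <- Sum_minus.
  eapply Rle_trans with (Sum L (fun r => 2 * (IZR y + 1) * ind_le (IZR b) (IZR (psum r)) +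
                                         between b (b + Z.of_nat K) (psum r) * IZR (psum r))).
  { apply Sum_le. intros r _. unfold h. rewrite HK. apply reflected_weight_le; auto. }
  rewrite Sum_plus, Sum_scal.
  pose proof (hoeffding_up L (IZR b) HL ltac:(apply IZR_lt; lia)) as Hc.
  pose proof (window_bound L b K HL Hb) as Hs.
  replace (INR K + 1) with (2 * (IZR y + 1)) in Hs
    by (rewrite INR_IZR_INZ, HK, plus_IZR, mult_IZR; simpl; lra).
  assert (Hexp : exp (- (IZR b * IZR b) / (8 * INR L)) <= exp (- (IZR b * IZR b) / (32 * INR L))).
  { apply exp_le_compat. assert (1 <= INR L) by (apply (le_INR 1); lia).
    assert (0 <= IZR b * IZR b) by nra.
    unfold Rdiv. rewrite !Ropp_mult_distr_l_reverse. apply Ropp_le_contravar.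
    apply Rmult_le_compat_l; auto. apply Rinv_le_contravar; lra. }
  assert (0 <= IZR y) by (apply IZR_le; lia).
  pose proof (pow_lt 2 L ltac:(lra)).
  assert (2 * (IZR y + 1) * Sum L (fun r => ind_le (IZR b) (IZR (psum r))) <=
          2 * (IZR y + 1) * (2 ^ L * exp (- (IZR b * IZR b) / (32 * INR L)))).
  { apply Rmult_le_compat_l; [lra |]. eapply Rle_trans; [exact Hc |].
    apply Rmult_le_compat_l; lra. }
  nra.
Qed.

Lemma cross_ratio Num Den X Y G w : 0 < w -> 0 <= X -> 0 <= Y ->
  Num * w <= G * X -> G * Y <= (Den - Num) * w -> Num * (X + Y) <= X * Den.
Proof.
  intros Hw HX HY H1 H2.
  assert (Num * w * Y <= G * X * Y) by (apply Rmult_le_compat_r; auto).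
  assert (G * Y * X <= (Den - Num) * w * X) by (apply Rmult_le_compat_r; auto).
  assert (Hc : Num * Y * w <= X * (Den - Num) * w) by nra.
  apply Rmult_le_reg_r in Hc; auto. nra.
Qed.

(* Change of measure by a weight f of the endpoint with f(z)/(z+1)
   non-increasing: the f-weighted probability of rising by b is at most the
   (z+1)-weighted one, whose total mass is (y+1) 2^L by harmonicity. *)
Lemma tilt_compare y L b (f : Z -> R) : (0 <= y)%Z -> (0 <= y + b)%Z ->
  (forall z, 0 <= f z) ->
  (forall w z, (0 <= w <= z)%Z -> f z * (IZR w + 1) <= f w * (IZR z + 1)) ->
  Wsum y L (fun p => ind (Z.leb b (psum p)) * f (y + psum p)%Z) * ((IZR y + 1) * 2 ^ L)
  <= Wsum y L (fun p => ind (Z.leb b (psum p)) * (IZR (y + psum p) + 1))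
     * Wsum y L (fun p => f (y + psum p)%Z).
Proof.
  intros Hy Hc Hf Hratio.
  set (Y := Wsum y L (fun p => (1 - ind (Z.leb b (psum p))) * (IZR (y + psum p) + 1))).
  set (X := Wsum y L (fun p => ind (Z.leb b (psum p)) * (IZR (y + psum p) + 1))).
  assert (HXY : X + Y = (IZR y + 1) * 2 ^ L).
  { rewrite <- harmonic by auto. unfold X, Y. rewrite <- Wsum_plus.
    apply Wsum_ext. intros; lra. }
  rewrite <- HXY.
  assert (Hend : forall p, In p (all_steps L) -> nonneg_path y L p = true ->
                 (0 <= y + psum p)%Z).
  { intros p Hp E. destruct (in_all_steps _ _ Hp) as [Hl _]. subst L.
    apply nonneg_path_end; auto. }
  assert (Hw : 0 < IZR (y + b) + 1) by (assert (0 <= IZR (y + b)) by (apply IZR_le; lia); lra).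
  apply (cross_ratio _ _ X Y (f (y + b)%Z) (IZR (y + b) + 1)); [exact Hw | | | |].
  - rewrite <- (Wsum_zero y L). apply Wsum_le. intros p Hp E. pose proof (Hend p Hp E).
    assert (0 <= IZR (y + psum p)) by (apply IZR_le; lia).
    destruct (Z.leb b (psum p)); unfold ind; lra.
  - rewrite <- (Wsum_zero y L). apply Wsum_le. intros p Hp E. pose proof (Hend p Hp E).
    assert (0 <= IZR (y + psum p)) by (apply IZR_le; lia).
    destruct (Z.leb b (psum p)); unfold ind; lra.
  - unfold X. rewrite Rmult_comm, <- !Wsum_scal. apply Wsum_le. intros p _ _.
    destruct (Z.leb_spec b (psum p)); unfold ind; [| pose proof (Hf (y + b)%Z); lra].
    pose proof (Hratio (y + b)%Z (y + psum p)%Z ltac:(lia)). lra.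
  - unfold Y. rewrite <- Wsum_minus, (Rmult_comm (Wsum _ _ _)), <- !Wsum_scal. apply Wsum_le. intros p Hp E.
    pose proof (Hend p Hp E).
    destruct (Z.leb_spec b (psum p)); unfold ind; [lra |].
    pose proof (Hratio (y + psum p)%Z (y + b)%Z ltac:(lia)). lra.
Qed.

(* The future after time L tilts
   the law of the first L steps by [npaths], whose ratio to z+1 decreases. *)
Lemma cond_rise_bound y N L b : (1 <= L <= N)%nat -> (1 <= b)%Z ->
  Wsum y N (fun q => ind (Z.leb b (psum (firstn L q))))
  <= 10 * exp (- (IZR b * IZR b) / (32 * INR L)) * Wsum y N (fun _ => 1).
Proof.
  intros HL Hb. destruct (Z.lt_ge_cases y 0) as [Hy | Hy].
  { rewrite !Wsum_neg by auto. lra. }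
  replace N with (L + (N - L))%nat by lia.
  rewrite (Wsum_markov_prefix y L (N - L) _ (fun p => ind (Z.leb b (psum p))))
    by (intros p q Hl; rewrite <- Hl, firstn_app_length; reflexivity).
  rewrite (Wsum_markov_prefix y L (N - L) _ (fun _ => 1)) by auto.
  rewrite (Wsum_ext y L (fun p => 1 * _) (fun p => npaths (N - L) (y + psum p))) by (intros; lra).
  pose proof (tilt_compare y L b (npaths (N - L)) Hy ltac:(lia) (npaths_nonneg _)
                (npaths_ratio _)) as Htilt.
  pose proof (harmonic_tail_bound L y b ltac:(lia) Hy Hb) as Htail.
  assert (Hmass : 0 < (IZR y + 1) * 2 ^ L).
  { assert (0 <= IZR y) by (apply IZR_le; lia). pose proof (pow_lt 2 L ltac:(lra)). nra. }
  assert (Hden : 0 <= Wsum y L (fun p => npaths (N - L) (y + psum p)))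
    by (apply Wsum_nonneg; intros; apply npaths_nonneg).
  apply (Rmult_le_reg_r ((IZR y + 1) * 2 ^ L)); [exact Hmass |].
  eapply Rle_trans; [exact Htilt |].
  replace (10 * exp (- (IZR b * IZR b) / (32 * INR L)) *
             Wsum y L (fun p => npaths (N - L) (y + psum p)) * ((IZR y + 1) * 2 ^ L))
    with (10 * ((IZR y + 1) * 2 ^ L) * exp (- (IZR b * IZR b) / (32 * INR L)) *
             Wsum y L (fun p => npaths (N - L) (y + psum p))) by ring.
  apply Rmult_le_compat_r; assumption.
Qed.

Lemma gauss_mono_time a K L' L : (1 <= L' <= L)%nat -> 0 <= a -> 0 < K ->
  exp (- a / (K * INR L')) <= exp (- a / (K * INR L)).
Proof.
  intros HL Ha HK. apply exp_le_compat.
  assert (1 <= INR L') by (apply (le_INR 1); lia).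
  assert (INR L' <= INR L) by (apply le_INR; lia).
  unfold Rdiv. rewrite !Ropp_mult_distr_l_reverse. apply Ropp_le_contravar.
  apply Rmult_le_compat_l; auto. apply Rinv_le_contravar; [nra | apply Rmult_le_compat_l; lra].
Qed.

Lemma cond_rise_bound_le y N j L b : (j <= L)%nat -> (j <= N)%nat -> (1 <= L)%nat -> (1 <= b)%Z ->
  Wsum y N (fun q => ind (Z.leb b (psum (firstn j q))))
  <= 10 * exp (- (IZR b * IZR b) / (32 * INR L)) * Wsum y N (fun _ => 1).
Proof.
  intros HjL HjN HL Hb.
  assert (Hpos : 0 <= Wsum y N (fun _ => 1)) by (apply Wsum_nonneg; intros; lra).
  destruct j as [| j].
  - simpl. destruct (Z.leb_spec b 0); [lia |]. unfold ind. rewrite Wsum_zero.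
    pose proof (exp_pos (- (IZR b * IZR b) / (32 * INR L))). nra.
  - eapply Rle_trans; [apply cond_rise_bound; [lia | exact Hb] |].
    apply Rmult_le_compat_r; [exact Hpos |]. apply Rmult_le_compat_l; [lra |].
    apply gauss_mono_time; [lia | nra | lra].
Qed.

Lemma cond_drop_bound_le y N j L b : (j <= L)%nat -> (j <= N)%nat -> (1 <= L)%nat -> 0 < b ->
  Wsum y N (fun q => ind_le (IZR (psum (firstn j q))) (- b))
  <= exp (- (b * b) / (8 * INR L)) * Wsum y N (fun _ => 1).
Proof.
  intros HjL HjN HL Hb.
  assert (Hpos : 0 <= Wsum y N (fun _ => 1)) by (apply Wsum_nonneg; intros; lra).
  destruct j as [| j].
  - simpl. unfold ind_le. destruct Rle_dec as [Hr |]; [simpl in Hr; lra |].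
    rewrite Wsum_zero. pose proof (exp_pos (- (b * b) / (8 * INR L))). nra.
  - eapply Rle_trans; [apply cond_drop_bound; [lia | exact Hb] |].
    apply Rmult_le_compat_r; [exact Hpos |].
    apply gauss_mono_time; [lia | nra | lra].
Qed.

Lemma prefix_increment_bound x n t k eps (pre : list Z -> R) (G : Z -> R) :
  (t <= k <= n)%nat -> 0 <= eps -> (forall s, 0 <= pre s) ->
  (forall p q, length p = t -> pre (p ++ q) = pre p) ->
  (forall y, Wsum y (n - t) (fun q => G (psum (firstn (k - t) q)))
             <= eps * Wsum y (n - t) (fun _ => 1)) ->
  Wsum x n (fun s => pre s * G (pos x s k - pos x s t)%Z) <= eps * Wsum x n pre.
Proof.
  intros Htk He Hpre Hadapt HG. replace n with (t + (n - t))%nat by lia.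
  rewrite !Wsum_markov. replace (t + (n - t) - t)%nat with (n - t)%nat by lia.
  rewrite <- Sum_scal. apply Sum_le. intros p Hp. destruct (in_all_steps _ _ Hp) as [Hl _].
  rewrite (Wsum_ext _ _ _ (fun q => pre p * G (psum (firstn (k - t) q)))).
  2:{ intros q. rewrite Hadapt, pos_increment by (auto; lia). reflexivity. }
  rewrite (Wsum_ext _ _ (fun q => pre (p ++ q)) (fun q => pre p * 1))
    by (intros; rewrite Hadapt by auto; lra).
  rewrite !Wsum_scal. specialize (HG (pos x p t)). pose proof (Hpre p).
  pose proof (Wsum_nonneg (pos x p t) (n - t) (fun _ => 1) ltac:(intros; lra)).
  destruct (nonneg_path x t p); unfold ind; nra.
Qed.

(** * First passage decomposition *)

Definition first_hit (P : nat -> bool) (m t : nat) : bool :=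
  P t && forallb (fun i => negb (P i)) (seq m (t - m)).

Lemma first_hit_true P m t : first_hit P m t = true -> P t = true.
Proof. unfold first_hit. intros H. apply andb_prop in H. tauto. Qed.

Lemma first_hit_ext (P Q : nat -> bool) m t :
  (forall i, (i <= t)%nat -> P i = Q i) -> first_hit P m t = first_hit Q m t.
Proof.
  intros H. unfold first_hit. rewrite H by lia. f_equal.
  assert (Hs : forall i, In i (seq m (t - m)) -> (i <= t)%nat)
    by (intros i Hi; apply in_seq in Hi; lia).
  induction (seq m (t - m)); simpl; auto.
  rewrite H, IHl by (auto; intros; apply Hs; simpl; auto). reflexivity.
Qed.

Lemma first_hit_partition P m K :
  nsum (seq m K) (fun t => ind (first_hit P m t)) = ind (existsb P (seq m K)).
Proof.
  induction K; [simpl; unfold ind; lra |].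
  rewrite seq_S, nsum_app, existsb_app, IHK. simpl. unfold first_hit.
  replace (m + K - m)%nat with K by lia.
  assert (Hneg : forall l, forallb (fun i => negb (P i)) l = negb (existsb P l))
    by (induction l; simpl; auto; rewrite IHl; destruct (P a); reflexivity).
  rewrite Hneg.
  destruct (existsb P (seq m K)); destruct (P (m + K)%nat); simpl; unfold ind; lra.
Qed.

Lemma first_hit_cover (P : nat -> bool) m K (aft : nat -> R) (fixd : R) :
  0 <= fixd -> (forall t, 0 <= aft t) ->
  (fixd < 1 -> forall t, P t = true -> 1 <= aft t) ->
  ind (existsb P (seq m K)) <= fixd + nsum (seq m K) (fun t => ind (first_hit P m t) * aft t).
Proof.
  intros Hf Ha Hh. rewrite <- first_hit_partition.
  destruct (Rlt_le_dec fixd 1) as [Hd | Hd].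
  - assert (nsum (seq m K) (fun t => ind (first_hit P m t))
            <= nsum (seq m K) (fun t => ind (first_hit P m t) * aft t)); [| lra].
    apply nsum_le. intros t _. destruct (first_hit P m t) eqn:E; unfold ind; [| lra].
    apply first_hit_true in E. specialize (Hh Hd t E). lra.
  - rewrite first_hit_partition.
    assert (ind (existsb P (seq m K)) <= 1) by (unfold ind; destruct existsb; lra).
    assert (0 <= nsum (seq m K) (fun t => ind (first_hit P m t) * aft t)); [| lra].
    apply nsum_nonneg. intros t. specialize (Ha t). unfold ind; destruct first_hit; lra.
Qed.

(* Strong Markov property at the first time P holds, for P adapted to the
   path: the increment after the first hitting time obeys the same bound
   as after any deterministic time. *)
Lemma first_passage_bound x n m k (P : list Z -> nat -> bool) eps (G : Z -> R) :
  (m <= k <= n)%nat -> 0 <= eps ->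
  (forall p q i, (m <= length p)%nat -> (i <= length p)%nat -> P (p ++ q) i = P p i) ->
  (forall t y, (m <= t <= k)%nat ->
     Wsum y (n - t) (fun q => G (psum (firstn (k - t) q))) <= eps * Wsum y (n - t) (fun _ => 1)) ->
  Wsum x n (fun s => nsum (seq m (S (k - m)))
                      (fun t => ind (first_hit (P s) m t) * G (pos x s k - pos x s t)%Z))
  <= eps * Wsum x n (fun _ => 1).
Proof.
  intros Hmk He Hadapt HG. rewrite Wsum_nsum. eapply Rle_trans.
  - apply nsum_le. intros t Ht. apply in_seq in Ht.
    apply (prefix_increment_bound x n t k eps (fun s => ind (first_hit (P s) m t)) G);
      [lia | exact He | intros; unfold ind; destruct first_hit; lra | | intros y; apply HG; lia].
    intros p q Hl. f_equal. apply first_hit_ext. intros i Hi. apply Hadapt; lia.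
  - rewrite nsum_scal. apply Rmult_le_compat_l; [exact He |].
    rewrite <- Wsum_nsum. apply Wsum_le. intros q _ _. rewrite first_hit_partition.
    unfold ind; destruct existsb; lra.
Qed.

Lemma endpoint_increment_bound x n m k eps (G : Z -> R) :
  (m <= k <= n)%nat -> 0 <= eps ->
  (forall y, Wsum y (n - m) (fun q => G (psum (firstn (k - m) q))) <= eps * Wsum y (n - m) (fun _ => 1)) ->
  Wsum x n (fun s => G (pos x s k - pos x s m)%Z) <= eps * Wsum x n (fun _ => 1).
Proof.
  intros Hmk He HG.
  rewrite (Wsum_ext _ _ _ (fun s => 1 * G (pos x s k - pos x s m)%Z)) by (intros; lra).
  apply prefix_increment_bound; auto; intros; lra.
Qed.

Definition disp (x : Z) (s : list Z) (m i : nat) : Z := (pos x s i - pos x s m)%Z.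
Definition above (x : Z) (m : nat) (u : R) (s : list Z) (i : nat) : bool :=
  if Rlt_dec u (IZR (disp x s m i)) then true else false.
Definition below (x : Z) (m : nat) (u : R) (s : list Z) (i : nat) : bool :=
  if Rlt_dec (IZR (disp x s m i)) (- u) then true else false.

Lemma disp_app x p q m i : (m <= length p)%nat -> (i <= length p)%nat ->
  disp x (p ++ q) m i = disp x p m i.
Proof. intros Hm Hi. unfold disp. rewrite !pos_app_le by lia. reflexivity. Qed.

Lemma up_le_of_lt z r : r < IZR z -> (up r <= z)%Z.
Proof.
  intros H. destruct (archimed r) as [H1 H2].
  destruct (Z.le_gt_cases (up r) z) as [| Hgt]; auto.
  assert (Hz : (z <= up r - 1)%Z) by lia. apply IZR_le in Hz. rewrite minus_IZR in Hz.
  simpl in Hz. lra.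
Qed.

Lemma osc_split x m k u s : 0 < u ->
  ind (osc_event m k x u s) <= ind (existsb (above x m u s) (seq m (S (k - m)))) +
                               ind (existsb (below x m u s) (seq m (S (k - m)))).
Proof.
  intros Hu. unfold osc_event. induction (seq m (S (k - m))) as [| a l IH]; simpl; [unfold ind; lra |].
  unfold above at 1, below at 1, disp.
  destruct (Rlt_dec u (IZR (Z.abs (pos x s a - pos x s m)))) as [H | H].
  - destruct (Z.abs_spec (pos x s a - pos x s m)) as [[H1 H2] | [H1 H2]]; rewrite H2 in H.
    + destruct Rlt_dec; [| lra]. simpl.
      destruct (existsb (below x m u s) l); destruct Rlt_dec; simpl; unfold ind; lra.
    + rewrite opp_IZR in H. destruct (Rlt_dec (IZR (pos x s a - pos x s m)) (- u)); [| lra]. simpl.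
      destruct (Rlt_dec u _); destruct (existsb (above x m u s) l); simpl; unfold ind; lra.
  - simpl. unfold ind in *.
    destruct (Rlt_dec u (IZR (pos x s a - pos x s m)));
      destruct (Rlt_dec (IZR (pos x s a - pos x s m)) (- u));
      destruct (existsb (above x m u s) l); destruct (existsb (below x m u s) l); simpl in *; lra.
Qed.

Lemma osc_cover x m k u s : 0 < u ->
  ind (osc_event m k x u s) <=
    (ind (Z.leb (up (u / 2)) (disp x s m k))
     + nsum (seq m (S (k - m))) (fun t => ind (first_hit (above x m u s) m t)
                                         * ind_le (IZR (pos x s k - pos x s t)) (- (u / 2))))
  + (ind_le (IZR (disp x s m k)) (- (u / 2))
     + nsum (seq m (S (k - m))) (fun t => ind (first_hit (below x m u s) m t)
                                         * ind (Z.leb (up (u / 2)) (pos x s k - pos x s t)))).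
Proof.
  intros Hu. eapply Rle_trans; [apply (osc_split x m k u s Hu) |].
  assert (Hsplit : forall t, IZR (pos x s k - pos x s t) = IZR (disp x s m k) - IZR (disp x s m t))
    by (intros t; unfold disp; rewrite <- minus_IZR; f_equal; lia).
  apply Rplus_le_compat; apply first_hit_cover.
  - unfold ind; destruct Z.leb; lra.
  - intros t; unfold ind_le; destruct Rle_dec; lra.
  - intros Hf t Ht. unfold ind in Hf.
    destruct (Z.leb_spec (up (u / 2)) (disp x s m k)) as [| Hlt]; [lra |].
    unfold above in Ht. destruct Rlt_dec as [Hr |]; [| discriminate].
    assert (IZR (disp x s m k) <= u / 2).
    { destruct (Rle_dec (IZR (disp x s m k)) (u / 2)) as [| Hn]; auto.
      apply Rnot_le_lt, up_le_of_lt in Hn. lia. }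
    unfold ind_le. rewrite Hsplit. destruct Rle_dec; lra.
  - unfold ind_le; destruct Rle_dec; lra.
  - intros t; unfold ind; destruct Z.leb; lra.
  - intros Hf t Ht. unfold ind_le in Hf. destruct Rle_dec as [| Hn]; [lra |].
    unfold below in Ht. destruct Rlt_dec as [Hr |]; [| discriminate].
    assert (Hup : (up (u / 2) <= pos x s k - pos x s t)%Z) by (apply up_le_of_lt; rewrite Hsplit; lra).
    apply Z.leb_le in Hup. rewrite Hup. unfold ind. lra.
Qed.

Lemma gauss_rise_factor u b L : 0 < u -> (1 <= L)%nat -> u / 2 < IZR b ->
  exp (- (IZR b * IZR b) / (32 * INR L)) <= exp (- (u * u) / (128 * INR L)).
Proof.
  intros Hu HL Hb. apply exp_le_compat. assert (1 <= INR L) by (apply (le_INR 1); lia).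
  assert (u * u / 4 <= IZR b * IZR b) by nra.
  unfold Rdiv. rewrite !Ropp_mult_distr_l_reverse. apply Ropp_le_contravar.
  replace (u * u * / (128 * INR L)) with ((u * u / 4) * / (32 * INR L)) by (field; lra).
  apply Rmult_le_compat_r; auto. left; apply Rinv_0_lt_compat; lra.
Qed.

Lemma gauss_drop_factor u L : 0 < u -> (1 <= L)%nat ->
  exp (- (u / 2 * (u / 2)) / (8 * INR L)) <= exp (- (u * u) / (128 * INR L)).
Proof.
  intros Hu HL. apply exp_le_compat. assert (1 <= INR L) by (apply (le_INR 1); lia).
  replace (- (u / 2 * (u / 2)) / (8 * INR L)) with (4 * (- (u * u) / (128 * INR L))) by (field; lra).
  assert (0 <= u * u / (128 * INR L)) by (apply Rmult_le_pos; [nra | left; apply Rinv_0_lt_compat; lra]).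
  unfold Rdiv in *. lra.
Qed.

Lemma osc_weight_bound x m k n u : (m < k)%nat -> (k <= n)%nat -> 0 < u ->
  Wsum x n (fun s => ind (osc_event m k x u s))
  <= (20 * exp (- (IZR (up (u / 2)) * IZR (up (u / 2))) / (32 * INR (k - m)))
      + 2 * exp (- (u / 2 * (u / 2)) / (8 * INR (k - m)))) * Wsum x n (fun _ => 1).
Proof.
  intros Hmk Hkn Hu.
  set (L := (k - m)%nat). set (b := up (u / 2)).
  assert (Hb : (1 <= b)%Z).
  { assert (u / 2 < IZR b) by apply archimed. assert (0 < b)%Z by (apply lt_0_IZR; lra). lia. }
  set (eU := exp (- (IZR b * IZR b) / (32 * INR L))).
  set (eD := exp (- (u / 2 * (u / 2)) / (8 * INR L))).
  assert (HeU0 : 0 <= eU) by (left; apply exp_pos).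
  assert (HeD0 : 0 <= eD) by (left; apply exp_pos).
  set (Tot := Wsum x n (fun _ => 1)).
  assert (Hrise_end : Wsum x n (fun s => ind (Z.leb b (disp x s m k))) <= 10 * eU * Tot).
  { apply endpoint_increment_bound with (G := fun z => ind (Z.leb b z)); [lia | lra |].
    intros y. apply cond_rise_bound_le; unfold L; lia. }
  assert (Hdrop_end : Wsum x n (fun s => ind_le (IZR (disp x s m k)) (- (u / 2))) <= eD * Tot).
  { apply endpoint_increment_bound with (G := fun z => ind_le (IZR z) (- (u / 2))); [lia | lra |].
    intros y. apply cond_drop_bound_le; unfold L; lia || lra. }
  assert (Hdrop_after : Wsum x n (fun s => nsum (seq m (S L)) (fun t =>
            ind (first_hit (above x m u s) m t) * ind_le (IZR (pos x s k - pos x s t)) (- (u / 2))))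
          <= eD * Tot).
  { apply first_passage_bound with (G := fun z => ind_le (IZR z) (- (u / 2))); [lia | lra | |].
    - intros p q i Hm Hi. unfold above. rewrite disp_app by lia. reflexivity.
    - intros t y Ht. apply cond_drop_bound_le; unfold L; lia || lra. }
  assert (Hrise_after : Wsum x n (fun s => nsum (seq m (S L)) (fun t =>
            ind (first_hit (below x m u s) m t) * ind (Z.leb b (pos x s k - pos x s t))))
          <= 10 * eU * Tot).
  { apply first_passage_bound with (G := fun z => ind (Z.leb b z)); [lia | lra | |].
    - intros p q i Hm Hi. unfold below. rewrite disp_app by lia. reflexivity.
    - intros t y Ht. apply cond_rise_bound_le; unfold L; lia. }
  eapply Rle_trans; [apply Wsum_le; intros s _ _; apply (osc_cover x m k u s Hu) |].
  rewrite !Wsum_plus. fold L b Tot. lra.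
Qed.

Theorem osc_bound x m k n u : (0 <= x)%Z -> (m < k)%nat -> (k <= n)%nat -> 0 < u ->
  Pn x n (osc_event m k x u) <= 22 * exp (- (u * u) / (128 * INR (k - m))).
Proof.
  intros Hx Hmk Hkn Hu. assert (HL : (1 <= k - m)%nat) by lia.
  pose proof (gauss_rise_factor u (up (u / 2)) (k - m) Hu HL ltac:(apply archimed)) as HeU.
  pose proof (gauss_drop_factor u (k - m) Hu HL) as HeD.
  pose proof (osc_weight_bound x m k n u Hmk Hkn Hu) as Hw.
  assert (HT : 1 <= Wsum x n (fun _ => 1)) by apply (npaths_ge_1 n x Hx).
  rewrite Pn_Wsum. apply (Rmult_le_reg_r (Wsum x n (fun _ => 1))); [lra |].
  unfold Rdiv. rewrite Rmult_assoc, Rinv_l, Rmult_1_r by lra.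
  eapply Rle_trans; [exact Hw |]. apply Rmult_le_compat_r; lra.
Qed.

Theorem theoremA8 :
  exists C c : R, 0 < C /\ 0 < c /\
    forall (x : Z) (m k n : nat) (u : R),
      (0 <= x)%Z -> (m < k)%nat -> (k <= n)%nat -> 0 < u ->
      Pn x n (osc_event m k x u) <= C * exp (- (c * u ^ 2) / INR (k - m)).
Proof.
  exists 22, (1 / 128). split; [lra |]. split; [lra |].
  intros x m k n u Hx Hmk Hkn Hu.
  replace (- (1 / 128 * u ^ 2) / INR (k - m)) with (- (u * u) / (128 * INR (k - m))).
  - apply osc_bound; auto.
  - assert (0 < INR (k - m)) by (apply lt_0_INR; lia). field. lra.
Qed.
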